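(* Let $l\ge1$, $m=2l$, and consider the $[[2^{2l},l+1,2^l]]$ phantom quantum Reed–Muller code, with logical states $|c\rangle_L\propto\sum_{s\in\mathrm{rs}(H_X)}|cL_X+s\rangle$ for $c\in\mathbb F_2^{l+1}$, where the rows of $L_X$ are $\mathrm{ev}(x_1\cdots x_{l-1}x_j)$ for $j=l,l+1,\dots,2l$ in this order. For an involution $\tau$ of $\mathbb F_2^{2l}$ let $F_\tau$ be the diagonal circuit applying $S=\mathrm{diag}(1,i)$ to every qubit $a$ with $\tau(a)=a$ and $\mathrm{CZ}$ to every pair $\{a,\tau(a)\}$ with $\tau(a)\neq a$. (a) Let $\tau_{SS}(a)_i=a_{2l+1-i}+1$ for $i\in[2l]$. Then $F_{\tau_{SS}}$ preserves the codespace and $F_{\tau_{SS}}|c\rangle_L=i^{c_1+c_2}|c\rangle_L$ for all $c$ (logical $S\otimes S$ on logical qubits 1 and 2, identity on the others). (b) Let $\tau_{CZ}(a)_i=a_{2l+1-i}+1$ for $i\in[2l]\setminus\{l,l+1\}$, $\tau_{CZ}(a)_l=a_l+1$, $\tau_{CZ}(a)_{l+1}=a_{l+1}+1$. Then $F_{\tau_{CZ}}$ preserves the codespace and $F_{\tau_{CZ}}|c\rangle_L=(-1)^{c_1c_2}|c\rangle_L$ for all $c$ (logical CZ between logical qubits 1 and 2).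
   Context: Coordinates of $2^{2l}$ qubits are identified with $\mathbb F_2^{2l}$; $\mathrm{ev}(f)=(f(a))_{a\in\mathbb F_2^{2l}}$ for Boolean polynomials $f$; $\mathrm{RM}(r,m)$ is the span of evaluation vectors of monomials of degree $\le r$ ($\{0\}$ if $r<0$). For $S\subseteq[m]$, $x_S=\prod_{i\in S}x_i$ and $\hat x_S=\prod_{i\notin S}(1+x_i)$. The phantom qRM code (here with $m=2l$) is the CSS code with $\mathrm{rs}(H_X)=\mathrm{RM}(l-1,m)$ and $\mathrm{rs}(H_Z)=\mathrm{RM}(m-l-1,m)+\mathrm{span}\{\mathrm{ev}(\hat x_S):|S|=l,\ S\ne\{1,\dots,l-1,j\}\text{ for all }j\in\{l,\dots,m\}\}$; its logical qubit $t$ corresponds to $X$-logical $x_1\cdots x_{l-1}x_{l+t-1}$. *)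

From HB Require Import structures.
From mathcomp Require Import all_boot all_order all_algebra algC.
Set Implicit Arguments. Unset Strict Implicit. Unset Printing Implicit Defensive.
Import Order.TTheory GRing.Theory Num.Theory.
Local Open Scope ring_scope.

(* Points of F_2^m (coordinates 0-based: paper's coordinate i is ordinal i-1). *)
Notation Pt m := {ffun 'I_m -> 'F_2}.
(* Binary words of length 2^m indexed by points (classical bit strings on the qubits). *)
Notation word m := {ffun Pt m -> 'F_2}.
(* Quantum states on the 2^m qubits: amplitude for each computational basis string. *)
Notation state m := {ffun word m -> algC}.

Definition mono (m : nat) (S : {set 'I_m}) (a : Pt m) : 'F_2 := \prod_(i in S) a i.

Definition RM (r m : nat) : {set word m} :=
  [set w : word m | [exists beta : {ffun {set 'I_m} -> 'F_2},
     w == [ffun a => \sum_(S : {set 'I_m} | (#|S| <= r)%N) beta S * mono S a]]].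

(* Support of the j-th (0-based) row of L_X: x_1 ... x_{l-1} x_{l+j} (1-based). *)
Definition LXsupp (l : nat) (j : nat) : {set 'I_(l.*2)} :=
  [set i : 'I_(l.*2) | (val i < l.-1)%N || (val i == l.-1 + j)%N].

Definition cLX (l : nat) (c : {ffun 'I_(l.+1) -> 'F_2}) : word (l.*2) :=
  [ffun a => \sum_(j : 'I_(l.+1)) c j * mono (LXsupp l j) a].

(* Unnormalized logical state |c>_L = sum_{s in rs(H_X)} |c L_X + s>, rs(H_X) = RM(l-1,2l). *)
Definition logical (l : nat) (c : {ffun 'I_(l.+1) -> 'F_2}) : state (l.*2) :=
  [ffun x : word (l.*2) =>
     \sum_(s in RM l.-1 (l.*2)) (if x == cLX c + s then 1 else 0)].

Definition codespace (l : nat) (psi : state (l.*2)) : Prop :=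
  exists alpha : {ffun 'I_(l.+1) -> 'F_2} -> algC,
    psi = [ffun x => \sum_(c : {ffun 'I_(l.+1) -> 'F_2}) alpha c * logical c x].

Definition Fphase (m : nat) (tau : Pt m -> Pt m) (x : word m) : algC :=
  (\prod_(a : Pt m | tau a == a) (if x a == 1 then 'i else 1)) *
  (\prod_(P : {set Pt m} | [exists a : Pt m, (tau a != a) && (P == [set a; tau a])])
      (if [forall b in P, x b == 1] then -1 else 1)).

Definition Fcirc (m : nat) (tau : Pt m -> Pt m) (psi : state m) : state m :=
  [ffun x => Fphase tau x * psi x].

Definition tauSS (l : nat) (a : Pt (l.*2)) : Pt (l.*2) :=
  [ffun i => a (rev_ord i) + 1].

Definition tauCZ (l : nat) (a : Pt (l.*2)) : Pt (l.*2) :=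
  [ffun i => if (val i == l.-1)%N || (val i == l)%N then a i + 1 else a (rev_ord i) + 1].

Definition bitphase (b : 'F_2) (z : algC) : algC := if b == 1 then z else 1.

From mathcomp Require Import all_boot all_order all_algebra algC.
From mathcomp Require Import zify ring.
Set Implicit Arguments. Unset Strict Implicit. Unset Printing Implicit Defensive.
Import GRing.Theory Num.Theory.
Local Open Scope ring_scope.

(* F_tau multiplies |x> by i^q(x), where q(x) = #{a | x_a = x_(tau a) = 1} read
   modulo 4 (a fixed point contributes i, a 2-cycle {a, tau a} contributes
   i^2 = -1).  Modulo 4, q is a quadratic form whose polar form is
   2 M(x, y) with M(x, y) = #{a | x_a = y_(tau a) = 1}.  When tau permutes the
   coordinates by an involution and then complements them, M of two monomials
   counts the points of a subcube, a power of 2 which vanishes modulo 4 (resp.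
   modulo 2) as soon as the degrees leave two (resp. one) coordinates free.
   Hence q vanishes on RM(l-1, 2l) and on the rows x_1...x_(l-1)x_j, j > l+1,
   and is orthogonal to everything there, so q is constant on each coset
   c L_X + RM(l-1, 2l) and depends only on c_1, c_2 through the two rows
   x_1...x_l and x_1...x_(l-1)x_(l+1). *)

Lemma F2_cases (b : 'F_2) : b = 0 \/ b = 1.
Proof. by case: b => [[|[|n]] //] Hn; [left|right]; apply/val_inj. Qed.

Lemma F2_add11 : 1 + 1 = 0 :> 'F_2.
Proof. exact/val_inj. Qed.

Lemma Z4_natr4 : 4%:R = 0 :> 'Z_4.
Proof. exact/val_inj. Qed.

Lemma sum_F2 (V : nmodType) (F : 'F_2 -> V) : \sum_b F b = F 0 + F 1.
Proof.
rewrite (bigD1 0) //= (bigD1 1) //= big1 ?addr0 // => b /andP[b0 b1].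
by case: (F2_cases b) b0 b1 => ->; rewrite eqxx.
Qed.

Lemma expCi_Z4 n (z : 'Z_4) : n%:R = z -> 'i ^+ n = 'i ^+ val z :> algC.
Proof.
move<-; rewrite Zp_nat.
have i4 : 'i ^+ 4 = 1 :> algC.
  by rewrite (_ : 4%N = (2 * 2)%N) // exprM sqrCi sqrrN expr1n.
by rewrite {1}(divn_eq n 4) exprD mulnC exprM i4 expr1n mul1r.
Qed.

Lemma forall_in_set2 (T : finType) (u v : T) (f : pred T) :
  [forall b in [set u; v], f b] = f u && f v.
Proof.
apply/forall_inP/andP => [H|[Hu Hv] b].
  by split; apply: H; rewrite !inE eqxx ?orbT.
by rewrite !inE => /orP[] /eqP ->.
Qed.

Lemma eq_Fphase m (tau tau' : Pt m -> Pt m) : tau =1 tau' -> Fphase tau =1 Fphase tau'.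
Proof.
move=> E x; rewrite /Fphase; congr (_ * _).
  by apply: eq_bigl => a; rewrite E.
by apply: eq_bigl => P; apply: eq_existsb => a; rewrite !E.
Qed.

Definition lift4 (b : 'F_2) : 'Z_4 := (b == 1)%:R.

Lemma lift40 : lift4 0 = 0. Proof. by []. Qed.
Lemma lift41 : lift4 1 = 1. Proof. by []. Qed.

Lemma lift4M u v : lift4 (u * v) = lift4 u * lift4 v.
Proof.
by case: (F2_cases u) => ->; case: (F2_cases v) => ->;
  rewrite ?mul0r ?mulr0 ?mul1r ?lift40 ?lift41 ?mul0r ?mulr1.
Qed.

Lemma lift4D u v : lift4 (u + v) = lift4 u + lift4 v - 2 * lift4 u * lift4 v.
Proof.
by case: (F2_cases u) => ->; case: (F2_cases v) => ->;
  rewrite ?add0r ?addr0 ?F2_add11 ?lift40 ?lift41; ring.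
Qed.

Section Twist.
Variables (m : nat) (sg : 'I_m -> 'I_m).
Hypothesis sgK : involutive sg.

Definition twist (a : Pt m) : Pt m := [ffun i => a (sg i) + 1].

Lemma twistK : involutive twist.
Proof. by move=> a; apply/ffunP=> i; rewrite !ffunE sgK -addrA F2_add11 addr0. Qed.

Lemma sum_twist (V : nmodType) (F : Pt m -> V) : \sum_a F (twist a) = \sum_a F a.
Proof. by rewrite [RHS](reindex_inj (can_inj twistK)). Qed.

Lemma sum_twist_double (F : Pt m -> 'Z_4) : \sum_a 2 * (F a + F (twist a)) = 0.
Proof.
rewrite -mulr_sumr big_split /= sum_twist.
have -> S : 2 * (S + S) = 4%:R * S :> 'Z_4 by ring.
by rewrite Z4_natr4 mul0r.
Qed.

Definition cross (x y : word m) : 'Z_4 := \sum_a lift4 (x a) * lift4 (y (twist a)).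
Definition qform x := cross x x.
(* [cross] is not additive, but [2 * cross] is: the correction term of
   [lift4D] is a multiple of 2. *)
Definition polar x y := 2 * cross x y.

Definition scalew (b : 'F_2) (x : word m) : word m := [ffun a => b * x a].

Lemma scale0w x : scalew 0 x = 0.
Proof. by apply/ffunP => a; rewrite !ffunE mul0r. Qed.

Lemma scale1w x : scalew 1 x = x.
Proof. by apply/ffunP => a; rewrite !ffunE mul1r. Qed.

Lemma crossC x y : cross x y = cross y x.
Proof. by rewrite /cross -[RHS]sum_twist; apply: eq_bigr => a _; rewrite twistK mulrC. Qed.

Lemma polarC x y : polar x y = polar y x.
Proof. by rewrite /polar crossC. Qed.

Lemma cross0r x : cross x 0 = 0.
Proof. by rewrite /cross big1 // => a _; rewrite ffunE lift40 mulr0. Qed.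

Lemma polar0r x : polar x 0 = 0.
Proof. by rewrite /polar cross0r mulr0. Qed.

Lemma qform0 : qform 0 = 0.
Proof. exact: cross0r. Qed.

Lemma polarDr x y1 y2 : polar x (y1 + y2) = polar x y1 + polar x y2.
Proof.
rewrite /polar /cross !mulr_sumr -big_split; apply: eq_bigr => a _.
rewrite ffunE lift4D.
set p := lift4 (x a); set q := lift4 (y1 _); set r := lift4 (y2 _).
have -> : 2 * (p * (q + r - 2 * q * r)) = 2 * (p * q) + 2 * (p * r) - 4%:R * (p * q * r)
  by ring.
by rewrite Z4_natr4 mul0r subr0.
Qed.

Lemma polarDl x1 x2 y : polar (x1 + x2) y = polar x1 y + polar x2 y.
Proof. by rewrite polarC polarDr !(polarC y). Qed.

Lemma polar_sumr x (I : Type) (r : seq I) (P : pred I) (F : I -> word m) :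
  polar x (\sum_(i <- r | P i) F i) = \sum_(i <- r | P i) polar x (F i).
Proof. exact: (big_morph (polar x) (polarDr x) (polar0r x)). Qed.

Lemma qformD x y : qform (x + y) = qform x + qform y + polar x y.
Proof.
pose X a := lift4 (x a); pose Y a := lift4 (y a).
pose u a := X a * Y a * X (twist a); pose v a := X a * Y a * Y (twist a).
have expand a : lift4 ((x + y) a) * lift4 ((x + y) (twist a)) =
    X a * X (twist a) + Y a * Y (twist a) + (X a * Y (twist a) + Y a * X (twist a))
    + 2 * (u a + u (twist a)) + 2 * (v a + v (twist a)).
  rewrite /u /v twistK !ffunE !lift4D -/(X a) -/(Y a) -/(X (twist a)) -/(Y (twist a)).
  set p := X a; set q := Y a; set p' := X _; set q' := Y _.
  have -> : (p + q - 2 * p * q) * (p' + q' - 2 * p' * q') =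
    p * p' + q * q' + (p * q' + q * p') + 2 * (p * q * p' + p' * q' * p)
    + 2 * (p * q * q' + p' * q' * q)
    + 4%:R * (p * q * p' * q' - p * q * p' - p' * q' * p - p * q * q' - p' * q' * q)
    by ring.
  by rewrite Z4_natr4 mul0r addr0.
rewrite /qform /cross (eq_bigr _ (fun a _ => expand a)) !big_split /=.
rewrite !sum_twist_double !addr0 -/(cross x y) -/(cross y x) (crossC y x) /polar /cross.
ring.
Qed.

Lemma qform_sum (I : Type) (r : seq I) (P : pred I) (F : I -> word m) :
  (forall i, P i -> qform (F i) = 0) ->
  (forall i j, P i -> P j -> polar (F i) (F j) = 0) ->
  qform (\sum_(i <- r | P i) F i) = 0.
Proof.
move=> F_iso F_orth; elim: r => [|i r IH]; first by rewrite big_nil qform0.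
rewrite big_cons; case: ifP => Pi //.
by rewrite qformD IH F_iso // polar_sumr big1 ?addr0 // => j Pj; apply: F_orth.
Qed.

Lemma qform_addr_null x y : qform y = 0 -> polar x y = 0 -> qform (x + y) = qform x.
Proof. by move=> y0 xy0; rewrite qformD y0 xy0 !addr0. Qed.

Lemma qformZ b x : qform (scalew b x) = lift4 b * qform x.
Proof.
by case: (F2_cases b) => ->; rewrite ?scale0w ?scale1w ?qform0 ?lift40 ?lift41 ?mul0r ?mul1r.
Qed.

Lemma polarZ b b' x y : polar (scalew b x) (scalew b' y) = lift4 b * lift4 b' * polar x y.
Proof.
case: (F2_cases b) => ->; case: (F2_cases b') => ->;
  by rewrite ?(scale0w, scale1w, lift40, lift41, mul0r, mulr0, mul1r, polar0r)
     // polarC polar0r.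
Qed.

Lemma qform_pair b b' x y : qform (scalew b x + scalew b' y) =
  lift4 b * qform x + lift4 b' * qform y + lift4 b * lift4 b' * polar x y.
Proof. by rewrite qformD !qformZ polarZ. Qed.

Definition twist_count (x : word m) := #|[pred a | (x a == 1) && (x (twist a) == 1)]|.

Lemma qform_twist_count x : qform x = (twist_count x)%:R.
Proof.
rewrite /qform /cross /twist_count -sumr_const [RHS]big_mkcond /=.
by apply: eq_bigr => a _; rewrite /lift4 inE -natrM mulnb; case: (_ && _).
Qed.

Lemma Fphase_twist_count x : Fphase twist x = 'i ^+ twist_count x.
Proof.
pose q a : algC := if (x a == 1) && (x (twist a) == 1) then 'i else 1.
have -> : 'i ^+ twist_count x = \prod_a q a.
  by rewrite -prodr_const big_mkcond /=; apply: eq_bigr => a _; rewrite inE.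
rewrite (bigID (fun a => twist a == a)) /=; congr (_ * _).
  by apply: eq_bigr => a /eqP Ha; rewrite /q Ha andbb.
rewrite (partition_big (fun a => [set a; twist a])
   (fun P => [exists a, (twist a != a) && (P == [set a; twist a])])) /=; last first.
  by move=> a Ha; apply/existsP; exists a; rewrite Ha eqxx.
apply: eq_bigr => P /existsP[a0 /andP[Ha0 /eqP ->]].
rewrite (bigD1 a0) /=; last by rewrite Ha0 eqxx.
rewrite (bigD1 (twist a0)) /=; last by rewrite twistK eq_sym Ha0 setUC eqxx.
rewrite big1 ?mulr1; last first.
  move=> a /andP[/andP[/andP[_ /eqP Ha] n1] n2].
  have : a \in [set a0; twist a0] by rewrite -Ha !inE eqxx.
  by rewrite !inE (negbTE n1) (negbTE n2).
rewrite forall_in_set2 /q twistK [(x a0 == 1) && _]andbC.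
by case: (_ && _); rewrite ?mulr1 // -expr2 sqrCi.
Qed.

Lemma Fphase_qform x (z : 'Z_4) : qform x = z -> Fphase twist x = 'i ^+ val z.
Proof. by rewrite qform_twist_count Fphase_twist_count => /expCi_Z4. Qed.

Definition ev_mono (S : {set 'I_m}) : word m := [ffun a => mono S a].

(* Coordinate [i] of a point is forced to 1 if [i \in S] and to 0 if
   [sg i \in T]; the count of such points factorises over the coordinates. *)
Lemma cross_mono (S T : {set 'I_m}) :
  cross (ev_mono S) (ev_mono T) = \prod_i ((i \notin S)%:R + (sg i \notin T)%:R).
Proof.
pose f i (b : 'F_2) :=
  (if i \in S then lift4 b else 1) * (if sg i \in T then lift4 (b + 1) else 1).
have E a : lift4 (ev_mono S a) * lift4 (ev_mono T (twist a)) = \prod_i f i (a i).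
  rewrite !ffunE /mono !(big_morph lift4 lift4M lift41).
  have -> : \prod_(i in T) lift4 (twist a i) =
            \prod_i (if sg i \in T then lift4 (a i + 1) else 1).
    rewrite (reindex_inj (can_inj sgK)) big_mkcond /=; apply: eq_bigr => i _.
    by rewrite ffunE sgK.
  by rewrite big_mkcond -big_split.
rewrite /cross (eq_bigr _ (fun a _ => E a)) -bigA_distr_bigA; apply: eq_bigr => i _.
rewrite sum_F2 /f add0r F2_add11 lift40 lift41.
by case: (i \in S); case: (sg i \in T); rewrite /= ?mulr1 ?mul1r ?mul0r ?mulr0 ?addr0 ?add0r.
Qed.

Lemma cross_mono_clash (S T : {set 'I_m}) i :
  i \in S -> sg i \in T -> cross (ev_mono S) (ev_mono T) = 0.
Proof. by move=> iS sgiT; rewrite cross_mono (bigD1 i) //= iS sgiT add0r mul0r. Qed.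

Lemma cross_mono_compl (S T : {set 'I_m}) : (forall i, (i \in S) != (sg i \in T)) ->
  cross (ev_mono S) (ev_mono T) = 1.
Proof.
move=> H; rewrite cross_mono big1 // => i _; have := H i.
by case: (i \in S); case: (sg i \in T) => //= _; rewrite ?add0r ?addr0.
Qed.

Lemma card_free_coords k (S T : {set 'I_m}) : (#|S| + #|T| + k <= m)%N ->
  (k <= #|~: (S :|: sg @^-1: T)|)%N.
Proof.
move=> H; have [H1 _] := leq_card_setU S (sg @^-1: T).
rewrite card_preimset in H1; last exact: can_inj sgK.
by have := cardsC (S :|: sg @^-1: T); rewrite card_ord; lia.
Qed.

Lemma polar_mono_small (S T : {set 'I_m}) :
  (#|S| + #|T| < m)%N -> polar (ev_mono S) (ev_mono T) = 0.
Proof.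
move=> H; have /card_gt0P[i] : (0 < #|~: (S :|: sg @^-1: T)|)%N.
  by apply: card_free_coords; lia.
rewrite !inE negb_or => /andP[h1 h2].
rewrite /polar cross_mono (bigD1 i) //= h1 h2 /=.
set r := \prod_(_ | _) _.
have -> : 2 * ((1%N%:R + 1%N%:R) * r) = 4%:R * r :> 'Z_4 by ring.
by rewrite Z4_natr4 mul0r.
Qed.

Lemma cross_mono_small (S T : {set 'I_m}) :
  (#|S| + #|T| + 2 <= m)%N -> cross (ev_mono S) (ev_mono T) = 0.
Proof.
move=> H; have /card_gt1P[i [j [hi hj ij]]] := card_free_coords H.
move: hi hj; rewrite !inE !negb_or => /andP[h1 h2] /andP[h3 h4].
rewrite cross_mono (bigD1 i) //= (bigD1 j) /=; last by rewrite eq_sym.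
rewrite h1 h2 h3 h4 /=.
set r := \prod_(_ | _) _.
have -> : (1%N%:R + 1%N%:R) * ((1%N%:R + 1%N%:R) * r) = 4%:R * r :> 'Z_4 by ring.
by rewrite Z4_natr4 mul0r.
Qed.

End Twist.

Lemma RM_sum r m (s : word m) : s \in RM r m ->
  exists beta : {ffun {set 'I_m} -> 'F_2},
    s = \sum_(S : {set 'I_m} | (#|S| <= r)%N) scalew (beta S) (ev_mono S).
Proof.
rewrite inE => /existsP[beta /eqP ->]; exists beta.
by apply/ffunP => a; rewrite sum_ffunE ffunE; apply: eq_bigr => S _; rewrite !ffunE.
Qed.

Definition LXrow l (j : 'I_l.+1) : word l.*2 := ev_mono (LXsupp l j).

Lemma cLX_sum l (c : {ffun 'I_l.+1 -> 'F_2}) : cLX c = \sum_j scalew (c j) (LXrow j).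
Proof.
by apply/ffunP => a; rewrite sum_ffunE ffunE; apply: eq_bigr => j _; rewrite !ffunE.
Qed.

Section PhantomCode.
Variable l : nat.
Hypothesis l_gt0 : (0 < l)%N.
Variable sg : 'I_l.*2 -> 'I_l.*2.
Hypothesis sgK : involutive sg.
Hypothesis sg_high : forall i : 'I_l.*2, (l < i)%N -> sg i = rev_ord i.

Lemma card_LXsupp (j : 'I_l.+1) : (#|LXsupp l j| <= l)%N.
Proof.
rewrite cardE -(size_map val).
apply: (leq_trans (uniq_leq_size (s2 := rcons (iota 0 l.-1) (l.-1 + j)) _ _)).
- by rewrite (map_inj_uniq val_inj) enum_uniq.
- move=> x /mapP[i]; rewrite mem_enum /LXsupp inE => /orP[H|/eqP H] ->;
    rewrite mem_rcons inE mem_iota ?H ?eqxx //=.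
  by apply/orP; right; lia.
- by rewrite size_rcons size_iota; lia.
Qed.

Lemma qform_RM_gen b (S : {set 'I_l.*2}) :
  (#|S| <= l.-1)%N -> qform sg (scalew b (ev_mono S)) = 0.
Proof. by move=> S_small; rewrite qformZ /qform (cross_mono_small sgK) ?mulr0 //; lia. Qed.

Lemma polar_RM_gen b b' (S T : {set 'I_l.*2}) : (#|S| <= l.-1)%N -> (#|T| <= l)%N ->
  polar sg (scalew b (ev_mono S)) (scalew b' (ev_mono T)) = 0.
Proof.
by move=> S_small T_small; rewrite (polarZ sgK) (polar_mono_small sgK) ?mulr0 //; lia.
Qed.

(* Row [j >= 2] contains the coordinate [l-1+j], which [sg] sends to [l-j < l-1],
   a coordinate contained in every row. *)
Lemma cross_LXrow_high (k j : 'I_l.+1) : (2 <= j)%N -> cross sg (LXrow k) (LXrow j) = 0.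
Proof.
move=> j_ge2; have lt_idx : (l.-1 + j < l.*2)%N by have := ltn_ord j; lia.
apply: (cross_mono_clash sgK (i := sg (Ordinal lt_idx))).
  by rewrite !inE sg_high /=; have := ltn_ord j; lia.
by rewrite sgK !inE /= eqxx orbT.
Qed.

Lemma qform_LXrow_high b (j : 'I_l.+1) : (2 <= j)%N -> qform sg (scalew b (LXrow j)) = 0.
Proof. by move=> j_ge2; rewrite qformZ /qform cross_LXrow_high ?mulr0. Qed.

Lemma polar_LXrow_high b b' (k j : 'I_l.+1) : (2 <= j)%N ->
  polar sg (scalew b (LXrow k)) (scalew b' (LXrow j)) = 0.
Proof. by move=> j_ge2; rewrite (polarZ sgK) /polar cross_LXrow_high ?mulr0. Qed.

Lemma qform_coset c s : s \in RM l.-1 l.*2 ->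
  qform sg (cLX c + s) =
  qform sg (scalew (c ord0) (LXrow ord0) + scalew (c (inord 1)) (LXrow (inord 1))).
Proof.
case/RM_sum => beta ->; rewrite cLX_sum.
rewrite (bigD1 ord0) //= (bigD1 (inord 1)) /=; last by rewrite -val_eqE /= inordK.
rewrite (eq_bigl (fun j : 'I_l.+1 => (2 <= j)%N)); last first.
  by move=> j; rewrite -!val_eqE /= inordK //; case: j => [[|[|j]] ?].
set r0 := scalew _ (LXrow ord0); set r1 := scalew _ (LXrow (inord 1)).
set R := \sum_(j | _) _; set s0 := \sum_(S | _) _.
have R_null : qform sg R = 0.
  by apply: qform_sum => // [j|j k] *; [apply: qform_LXrow_high|apply: polar_LXrow_high].
have s0_null : qform sg s0 = 0.
  apply: qform_sum => // [S|S T] *; first exact: qform_RM_gen.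
  by apply: polar_RM_gen => //; apply: leq_trans (leq_pred l).
have R_s0 : polar sg R s0 = 0.
  rewrite polar_sumr big1 // => S S_small; rewrite polarC // polar_sumr big1 // => j _.
  by apply: polar_RM_gen => //; apply: card_LXsupp.
have R_row b k : polar sg (scalew b (LXrow k)) R = 0.
  by rewrite polar_sumr big1 // => j; apply: polar_LXrow_high.
have s0_row b k : polar sg (scalew b (LXrow k)) s0 = 0.
  rewrite polar_sumr big1 // => S S_small; rewrite polarC //.
  by apply: polar_RM_gen => //; apply: card_LXsupp.
have -> : r0 + (r1 + R) + s0 = (r0 + r1) + (R + s0) by rewrite !addrA.
rewrite qform_addr_null //.
  by rewrite qformD // R_null s0_null R_s0 !addr0.
by rewrite polarDl // !polarDr !R_row !s0_row !addr0.
Qed.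

Lemma Fcirc_logical tau c : tau =1 twist sg ->
  Fcirc tau (logical c) = [ffun x => 'i ^+ val
    (qform sg (scalew (c ord0) (LXrow ord0) + scalew (c (inord 1)) (LXrow (inord 1))))
    * logical c x].
Proof.
move=> tauE; apply/ffunP => x; rewrite ffunE [RHS]ffunE (eq_Fphase tauE).
case: (boolP [exists s, (s \in RM l.-1 l.*2) && (x == cLX c + s)]).
  case/existsP => s /andP[s_RM /eqP ->].
  by rewrite (Fphase_qform sgK (qform_coset c s_RM)).
move=> not_coset; suff -> : logical c x = 0 by rewrite !mulr0.
rewrite ffunE big1 // => s s_RM; case: eqP => // x_coset; case/negP: not_coset.
by apply/existsP; exists s; rewrite s_RM x_coset eqxx.
Qed.

End PhantomCode.

Lemma codespace_Fcirc l tau (f : {ffun 'I_l.+1 -> 'F_2} -> algC) :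
  (forall c, Fcirc tau (logical c) = [ffun x => f c * logical c x]) ->
  forall psi, codespace psi -> codespace (Fcirc tau psi).
Proof.
move=> eig psi [alpha ->]; exists (fun c => alpha c * f c).
apply/ffunP => x; move: eig; rewrite /Fcirc; move: (@logical l) => v eig.
rewrite !ffunE mulr_sumr; apply: eq_bigr => c _.
have /ffunP/(_ x) := eig c; rewrite !ffunE => eig_x.
by rewrite mulrCA eig_x mulrA.
Qed.

Section Instances.
Variable l : nat.
Hypothesis l_gt0 : (0 < l)%N.

Let r0 := LXrow (ord0 : 'I_l.+1).
Let r1 := LXrow (inord 1 : 'I_l.+1).

Lemma val_inord1 : (inord 1 : 'I_l.+1) = 1%N :> nat.
Proof. by rewrite inordK //; lia. Qed.

Lemma qform_LXpair_rev b b' :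
  qform (@rev_ord l.*2) (scalew b r0 + scalew b' r1) = lift4 b + lift4 b'.
Proof.
have revK := @rev_ordK l.*2.
have c00 : cross (@rev_ord _) r0 r0 = 1.
  by apply: (cross_mono_compl revK) => i; rewrite !inE /=; have := ltn_ord i; lia.
have c11 : cross (@rev_ord _) r1 r1 = 1.
  apply: (cross_mono_compl revK) => i.
  by rewrite !inE /= val_inord1; have := ltn_ord i; lia.
have c01 : cross (@rev_ord _) r0 r1 = 0.
  have lt_l1 : (l.-1 < l.*2)%N by lia.
  by apply: (cross_mono_clash revK (i := Ordinal lt_l1)); rewrite !inE /= ?val_inord1; lia.
by rewrite (qform_pair revK) /qform /polar c00 c11 c01 !mulr1 !mulr0 addr0.
Qed.

Definition sgCZ (i : 'I_l.*2) : 'I_l.*2 :=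
  if (i == l.-1 :> nat) || (i == l :> nat) then i else rev_ord i.

Lemma sgCZK : involutive sgCZ.
Proof.
move=> i; rewrite /sgCZ; case fix_i: ((i == l.-1 :> nat) || (i == l :> nat)).
  by rewrite fix_i.
rewrite ifF ?rev_ordK //=; apply/negbTE; have := ltn_ord i; move: fix_i => /negbT; lia.
Qed.

Lemma sgCZ_high (i : 'I_l.*2) : (l < i)%N -> sgCZ i = rev_ord i.
Proof. by move=> lt_li; rewrite /sgCZ ifF //; lia. Qed.

Lemma tauCZ_twist : tauCZ (l := l) =1 twist sgCZ.
Proof. by move=> a; apply/ffunP => i; rewrite !ffunE /sgCZ; case: ifP. Qed.

Lemma qform_LXpair_CZ b b' :
  qform sgCZ (scalew b r0 + scalew b' r1) = 2 * (lift4 b * lift4 b').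
Proof.
have c00 : cross sgCZ r0 r0 = 0.
  have lt_l1 : (l.-1 < l.*2)%N by lia.
  by apply: (cross_mono_clash sgCZK (i := Ordinal lt_l1));
    rewrite /sgCZ /= ?eqxx !inE /=; lia.
have c11 : cross sgCZ r1 r1 = 0.
  have lt_l : (l < l.*2)%N by lia.
  by apply: (cross_mono_clash sgCZK (i := Ordinal lt_l));
    rewrite /sgCZ /= ?eqxx ?orbT !inE /= val_inord1; lia.
have c01 : cross sgCZ r0 r1 = 1.
  apply: (cross_mono_compl sgCZK) => i; rewrite /sgCZ.
  by case: ifP => fix_i; rewrite !inE /= val_inord1; have := ltn_ord i; move: fix_i; lia.
by rewrite (qform_pair sgCZK) /qform /polar c00 c11 c01 !mulr0 !add0r mulr1 mulrC.
Qed.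

Lemma Fcirc_tauSS_logical c : Fcirc (tauSS (l := l)) (logical c) =
  [ffun x => (bitphase (c ord0) 'i * bitphase (c (inord 1)) 'i) * logical c x].
Proof.
rewrite (Fcirc_logical l_gt0 (@rev_ordK _) (fun _ _ => erefl) c (fun _ => erefl)).
rewrite qform_LXpair_rev.
apply/ffunP => x; rewrite !ffunE; congr (_ * _).
by case: (F2_cases (c ord0)) => ->; case: (F2_cases (c (inord 1))) => ->;
  rewrite /bitphase ?lift40 ?lift41 /= ?expr2 ?mulr1 ?mul1r.
Qed.

Lemma Fcirc_tauCZ_logical c : Fcirc (tauCZ (l := l)) (logical c) =
  [ffun x => (if (c ord0 == 1) && (c (inord 1) == 1) then -1 else 1) * logical c x].
Proof.
rewrite (Fcirc_logical l_gt0 sgCZK sgCZ_high c tauCZ_twist) qform_LXpair_CZ.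
apply/ffunP => x; rewrite !ffunE; congr (_ * _).
by case: (F2_cases (c ord0)) => ->; case: (F2_cases (c (inord 1))) => ->;
  rewrite ?lift40 ?lift41 /= ?mul0r ?mulr0 ?mul1r //= -?expr2 ?sqrCi.
Qed.

End Instances.

Unset Implicit Arguments.

Theorem mainTheorem14 (l : nat) (hl : (1 <= l)%N) :
  ((forall psi, codespace psi -> codespace (Fcirc (@tauSS l) psi)) /\
   (forall c : {ffun 'I_(l.+1) -> 'F_2},
      Fcirc (@tauSS l) (logical c)
      = [ffun x => (bitphase (c ord0) 'i * bitphase (c (inord 1)) 'i) * logical c x])) /\
  ((forall psi, codespace psi -> codespace (Fcirc (@tauCZ l) psi)) /\
   (forall c : {ffun 'I_(l.+1) -> 'F_2},
      Fcirc (@tauCZ l) (logical c)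
      = [ffun x => (if (c ord0 == 1) && (c (inord 1) == 1) then -1 else 1) * logical c x])).
Proof.
have SS := Fcirc_tauSS_logical hl; have CZ := Fcirc_tauCZ_logical hl.
by split; split; [exact: codespace_Fcirc SS | | exact: codespace_Fcirc CZ |].
Qed.
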